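(* Let $G=(V,E,w)$ be a weighted digraph whose underlying graph has maximum degree $\hat{\Delta}$, and let $w_{\max}>0$ be the maximum edge weight. Let $m=\left\lfloor\frac{1-\epsilon}{w_{\max}}\right\rfloor$, i.e. $m$ is the largest integer with $m\,w_{\max}<1$. Then \[\chi_w(G)\le\left\lceil\frac{\hat{\Delta}}{m+1}\right\rceil+1.\]
   Context: A weighted digraph is $G=(V,E,w)$ with $w:E\to[0,1]$; its underlying graph is obtained by ignoring weights and directions. A $k$-coloring is a map $c:V\to\{1,\dots,k\}$, and $c[v]$ denotes the set of vertices with color $c(v)$. For $S\subseteq V$, $d^-_S(v)=\sum_{u\in S,(u,v)\in E}w(u,v)$. A weighted improper $k$-coloring is a $k$-coloring with $d^-_{c[v]}(v)<1$ for every $v$; $\chi_w(G)$ is the minimum $k$ for which one exists. In the paper's notation $\epsilon$ is an arbitrarily small positive quantity, so that $\lfloor(1-\epsilon)/w\rfloor$ is the largest integer $m$ with $mw<1$. *)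

From mathcomp Require Import all_boot all_order all_algebra.
Set Implicit Arguments. Unset Strict Implicit. Unset Printing Implicit Defensive.
Import Order.TTheory GRing.Theory Num.Theory.
Local Open Scope ring_scope.

(* A weighted digraph G = (V, E, w): V a finite vertex type, E : rel V the
   (directed) arc relation, w : V -> V -> R the weights (only w u v with
   E u v is meaningful).  Digraphs are loopless (E irreflexive), and
   weights lie in [0,1]; these are hypotheses of the theorem. *)

Section WDigraph.
Variables (R : realFieldType) (V : finType) (E : rel V) (w : V -> V -> R).

Definition din (S : {set V}) (v : V) : R :=
  \sum_(u in S | E u v) w u v.

Definition color_class k (c : {ffun V -> 'I_k}) (v : V) : {set V} :=
  [set u | c u == c v].

(* weighted improper k-colouring (colours 'I_k, i.e. {1..k} shifted) *)
Definition wimproper k (c : {ffun V -> 'I_k}) : bool :=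
  [forall v, din (color_class c v) v < 1].

Definition wcolorable (k : nat) : bool :=
  [exists c : {ffun V -> 'I_k}, wimproper c].

(* For a
   loopless digraph, k = #|V| always works (distinct colours), so the least
   such k lies in [0, #|V|] and is found by searching that range. *)
Definition chi_w : nat := find wcolorable (iota 0 #|V|.+1).

Definition udeg (v : V) : nat := #|[set u | (u != v) && (E u v || E v u)]|.
Definition max_udeg : nat := \max_(v : V) udeg v.

Definition wmax : R := \big[Num.max/0]_(u : V) \big[Num.max/0]_(v : V | E u v) w u v.

End WDigraph.

(* Following Lovasz, take a k-colouring of the
   underlying graph minimising the number of monochromatic edges.  Each vertex
   v has at most m neighbours of its own colour: the degree of v is below
   (m+1) k, so some colour occurs at most m times around v, and recolouring v
   with it would otherwise remove monochromatic edges.  Hence at most m arcs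
   enter v from its colour class, each of weight at most w_max, and
   m w_max < 1 makes the colouring weighted improper. *)

From mathcomp Require Import all_boot all_order all_algebra.
From mathcomp Require Import zify.
Import Order.TTheory GRing.Theory Num.Theory.

Set Implicit Arguments.
Unset Strict Implicit.
Unset Printing Implicit Defensive.

Section DefectiveColoring.
Variables (V : finType) (N : rel V).
Hypotheses (N_irr : irreflexive N) (N_sym : symmetric N).

Definition color_deg k (c : {ffun V -> 'I_k}) v a : nat :=
  \sum_y (N v y && (c y == a)).

Definition mono_pairs k (c : {ffun V -> 'I_k}) : nat :=
  \sum_x \sum_y (N x y && (c y == c x)).

Definition recolor k (c : {ffun V -> 'I_k}) v a : {ffun V -> 'I_k} :=
  [ffun z => if z == v then a else c z].

Lemma sum_pick1 (F : V -> nat) v : \sum_x (x == v) * F x = F v.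
Proof. by rewrite (bigD1 v) //= eqxx mul1n big1 ?addn0 // => x /negbTE ->. Qed.

Lemma mono_recolor_pair k (c : {ffun V -> 'I_k}) (v : V) (a : 'I_k) (x y : V) :
  (N x y && (recolor c v a y == recolor c v a x))
      + (x == v) * (N x y && (c y == c x)) + (y == v) * (N y x && (c x == c y))
  = (N x y && (c y == c x)) + (x == v) * (N x y && (c y == a))
      + (y == v) * (N y x && (c x == a)).
Proof.
rewrite !ffunE.
case: (eqVneq x v) => [->|xv]; case: (eqVneq y v) => [->|yv] /=;
  rewrite ?N_irr ?eqxx //=.
- by rewrite !mul1n !mul0n !addn0 addnC.
- rewrite (N_sym v x) [a == c x]eq_sym [c x == c v]eq_sym.
  by rewrite !mul1n !mul0n !addn0 addnC.
Qed.

(* Moving [v] from colour [c v] to [a] destroys the monochromatic pairs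
   [(v, y)] and [(y, v)] of colour [c v] and creates those of colour [a]. *)
Lemma mono_pairs_recolor k (c : {ffun V -> 'I_k}) v a :
  mono_pairs (recolor c v a) + 2 * color_deg c v (c v)
  = mono_pairs c + 2 * color_deg c v a.
Proof.
have sum3 (F G H : V -> V -> nat) :
    \sum_x \sum_y (F x y + (x == v) * G x y + (y == v) * H x y)
    = \sum_x \sum_y F x y + \sum_y G v y + \sum_x H x v.
  rewrite -(sum_pick1 (fun x => \sum_y G x y)) -!big_split /=.
  by apply: eq_bigr => x _; rewrite big_distrr -(sum_pick1 (H x)) -!big_split.
have : \sum_x \sum_y ((N x y && (recolor c v a y == recolor c v a x))
      + (x == v) * (N x y && (c y == c x)) + (y == v) * (N y x && (c x == c y)))
  = \sum_x \sum_y ((N x y && (c y == c x)) + (x == v) * (N x y && (c y == a))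
      + (y == v) * (N y x && (c x == a))).
  by apply: eq_bigr => x _; apply: eq_bigr => y _; exact: mono_recolor_pair.
by rewrite !sum3 /mono_pairs /color_deg !mul2n -!addnn !addnA.
Qed.

Lemma sum_color_deg k (c : {ffun V -> 'I_k}) v :
  \sum_(a < k) color_deg c v a = #|[set y | N v y]|.
Proof.
rewrite /color_deg exchange_big /= -sum1_card [RHS]big_mkcond /=.
apply: eq_bigr => y _; rewrite inE (bigD1 (c y)) //= eqxx andbT big1 ?addn0.
  by case: (N v y).
by move=> a /negbTE; rewrite eq_sym => ->; rewrite andbF.
Qed.

Lemma exists_sparse_color k (c : {ffun V -> 'I_k}) m v :
  #|[set y | N v y]| < m.+1 * k -> exists a, color_deg c v a <= m.
Proof.
move=> deg_lt; apply/existsP; apply: contraLR deg_lt.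
rewrite negb_exists -leqNgt.
move=> /forallP all_big; rewrite -(sum_color_deg c v) mulnC.
rewrite -[k in k * _]card_ord -sum_nat_const.
by apply: leq_sum => a _; rewrite ltnNge all_big.
Qed.

Lemma exists_defective_coloring k m :
  (forall v, #|[set y | N v y]| < m.+1 * k) ->
  exists c : {ffun V -> 'I_k}, forall v, color_deg c v (c v) <= m.
Proof.
move=> deg_lt.
(* With no colours available, the degree bound forces [V] to be empty. *)
have c0 : {ffun V -> 'I_k}.
  case: k deg_lt => [|k] deg_lt; last exact: [ffun=> ord0].
  by apply: finfun => v; move: (deg_lt v); rewrite muln0.
have [c _ c_min] := arg_minnP (@mono_pairs k) (isT : predT c0).
exists c => v; rewrite leqNgt; apply/negP => v_bad.
have [a a_sparse] := exists_sparse_color c (deg_lt v).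
have := mono_pairs_recolor c v a.
have := c_min (recolor c v a) isT; lia.
Qed.

End DefectiveColoring.

Lemma ltn_mul_ceil (d n : nat) : d < n.+1 * ((d + n) %/ n.+1 + 1).
Proof.
by have := divn_eq (d + n) n.+1; have := ltn_pmod (d + n) (ltn0Sn n); lia.
Qed.

Section UnderlyingGraph.
Variables (V : finType) (E : rel V).

Definition uadj : rel V := [rel u v | (u != v) && (E u v || E v u)].

Lemma uadj_irr : irreflexive uadj.
Proof. by move=> u; rewrite /uadj /= eqxx. Qed.

Lemma uadj_sym : symmetric uadj.
Proof. by move=> u v; rewrite /uadj /= eq_sym orbC. Qed.

Lemma udeg_uadj v : udeg E v = #|[set u | uadj v u]|.
Proof. by apply: eq_card => u; rewrite !inE uadj_sym. Qed.

Lemma udeg_le_max v : udeg E v <= max_udeg E.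
Proof. exact: leq_bigmax. Qed.

Lemma udeg_lt_card v : udeg E v < #|V|.
Proof.
have V_gt0 : 0 < #|V| by apply/card_gt0P; exists v.
rewrite -(prednK V_gt0) ltnS -(cardsC1 v).
by apply/subset_leq_card/subsetP => u; rewrite !inE => /andP[].
Qed.

End UnderlyingGraph.

Section WeightedColoring.
Local Open Scope ring_scope.
Variables (R : realFieldType) (V : finType) (E : rel V) (w : V -> V -> R).
Hypotheses (E_irr : irreflexive E) (wmax_ge0 : 0 <= wmax E w).

Lemma w_le_wmax u v : E u v -> w u v <= wmax E w.
Proof.
by move=> Euv; apply: le_trans (le_bigmax _ _ u); exact: le_bigmax_cond.
Qed.

Lemma din_color_class_le k (c : {ffun V -> 'I_k}) v :
  din E w (color_class c v) v <= (color_deg (uadj E) c v (c v))%:R * wmax E w.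
Proof.
rewrite /din /color_deg natr_sum mulr_suml big_mkcond /=.
apply: ler_sum => u _; rewrite /color_class inE.
case: ifP => [/andP[cuv Euv] | _]; last by rewrite mulr_ge0.
have uv : u != v by apply: contraTneq Euv => ->; rewrite E_irr.
by rewrite /uadj /= eq_sym uv Euv orbT cuv mul1r w_le_wmax.
Qed.

Lemma defective_wimproper k (c : {ffun V -> 'I_k}) m :
  m%:R * wmax E w < 1 -> (forall v, color_deg (uadj E) c v (c v) <= m)%N ->
  wimproper E w c.
Proof.
move=> m_wmax_lt1 c_defect; apply/forallP => v.
apply: le_lt_trans (din_color_class_le c v) (le_lt_trans _ m_wmax_lt1).
by rewrite ler_wpM2r // ler_nat.
Qed.

End WeightedColoring.

Lemma chi_w_le (R : realFieldType) (V : finType) (E : rel V)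
    (w : V -> V -> R) k :
  (k <= #|V|)%N -> wcolorable E w k -> (chi_w E w <= k)%N.
Proof.
move=> k_le col_k; rewrite /chi_w leqNgt; apply/negP => k_lt.
by have := before_find 0%N k_lt; rewrite nth_iota // ?ltnS // add0n col_k.
Qed.

Local Open Scope ring_scope.

Theorem theorem3p3 (R : realFieldType) (V : finType) (E : rel V)
    (w : V -> V -> R) (m : nat) :
  irreflexive E ->
  (forall u v, E u v -> 0 <= w u v <= 1) ->
  0 < wmax E w ->
  m%:R * wmax E w < 1 ->
  1 <= m.+1%:R * wmax E w ->
  (chi_w E w <= (max_udeg E + m) %/ m.+1 + 1)%N.
Proof.
(* The number of colours is capped at [#|V|] because [chi_w]
   only searches that range. *)
move=> E_irr _ wmax_gt0 m_wmax_lt1 _.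
set k := ((max_udeg E + m) %/ m.+1 + 1)%N.
pose j := minn k #|V|.
have deg_lt v : (#|[set u | uadj E v u]| < m.+1 * j)%N.
  rewrite -udeg_uadj minnMr leq_min; apply/andP; split.
    exact: leq_ltn_trans (udeg_le_max E v) (ltn_mul_ceil _ _).
  exact: leq_trans (udeg_lt_card E v) (leq_pmull _ _).
have [c c_defect] :=
  exists_defective_coloring (uadj_irr E) (uadj_sym E) deg_lt.
apply: leq_trans (geq_minl k #|V|); apply: chi_w_le (geq_minr _ _) _.
apply/existsP; exists c.
by apply: (defective_wimproper E_irr (ltW wmax_gt0) m_wmax_lt1 c_defect).
Qed.
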